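(* Let $k>l\ge0$ be integers. Then for every pair of positive numbers $C_1<1$ and $C_2>1$ there exists $N\in\mathbb{N}$ such that for all $n\ge N$, $$C_1n^{(k+l)/2}\le\beta^{lk}_n<\beta^{kl}_n\le C_2n^{(k+l)/2}.$$
   Context: For integers $x$ and $s\ge0$, $(x,s)=x(x+1)\cdots(x+s-1)$ ($=1$ if $s=0$), with the convention $(x,s)=0$ whenever $x$ is a negative integer; for integers $n$ and $k,l\ge0$, $\beta^{kl}_n=\sqrt{(n-l+1,l)(n-l+1,k)}$. *)

From Stdlib Require Import Reals ZArith.
Open Scope R_scope.

Fixpoint rising_raw (x : Z) (s : nat) : R :=
  match s with
  | O => 1
  | S s' => rising_raw x s' * IZR (x + Z.of_nat s')
  end.

(* (x,s) with the paper's convention: (x,s) = 0 whenever x is a negative integer. *)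
Definition rising (x : Z) (s : nat) : R :=
  if (x <? 0)%Z then 0 else rising_raw x s.

Definition beta (n : Z) (k l : nat) : R :=
  sqrt (rising (n - Z.of_nat l + 1)%Z l * rising (n - Z.of_nat l + 1)%Z k).

From Stdlib Require Import Reals ZArith Lra Lia Psatz.
Open Scope R_scope.

(* For [x >= 0] the rising factorial satisfies [x^s <= (x,s) <= (x+s)^s] and is
   monotone in [x], strictly so when [s > 0]. Hence both squares
   [(beta^{lk}_n)^2 = (n-k+1,k)(n-k+1,l)] and [(beta^{kl}_n)^2 = (n-l+1,l)(n-l+1,k)]
   lie between [(n-k+1)^(k+l)] and [(n+k+1)^(k+l)], and the first is strictly
   smaller because [n-k+1 < n-l+1]. By Bernoulli's inequality both bounds are
   [n^(k+l) (1 + O(1/n))], so they eventually lie between [C1^2 n^(k+l)] and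
   [C2^2 n^(k+l)]. *)

Lemma bernoulli_ineq (y : R) (m : nat) : y <= 1 -> 1 - INR m * y <= (1 - y) ^ m.
Proof.
  intros Hy. induction m as [|m IH]; cbn [pow]; [simpl; lra|].
  rewrite S_INR.
  assert (0 <= INR m) by apply pos_INR.
  nra.
Qed.

Lemma pow_sub_ge_eventually (a c : R) (m : nat) : a < 1 -> 0 <= c ->
  exists X, forall x, X <= x -> a * x ^ m <= (x - c) ^ m.
Proof.
  intros Ha Hc.
  assert (Hm : 0 <= INR m) by apply pos_INR.
  set (q := INR m * c / (1 - a)).
  assert (Hq : 0 <= q) by (unfold q; apply Rle_mult_inv_pos; nra).
  exists (1 + c + q). intros x Hx.
  assert (Hx0 : 0 < x) by lra.
  assert (Hmc : INR m * (c / x) <= 1 - a).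
  { assert (INR m * c <= (1 - a) * x).
    { assert (Eq : INR m * c = (1 - a) * q) by (unfold q; field; lra). nra. }
    apply (Rmult_le_reg_r x); [lra|].
    replace (INR m * (c / x) * x) with (INR m * c) by (field; lra). lra. }
  replace (x - c) with (x * (1 - c / x)) by (field; lra).
  rewrite Rpow_mult_distr.
  apply Rle_trans with (x ^ m * (1 - INR m * (c / x))).
  - rewrite (Rmult_comm a). apply Rmult_le_compat_l; [apply pow_le|]; lra.
  - apply Rmult_le_compat_l; [apply pow_le; lra|].
    apply bernoulli_ineq.
    apply (Rmult_le_reg_r x); [lra|].
    replace (c / x * x) with c by (field; lra). lra.
Qed.

Lemma pow_add_le_eventually (b c : R) (m : nat) : 1 < b -> 0 <= c ->
  exists X, forall x, X <= x -> (x + c) ^ m <= b * x ^ m.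
Proof.
  intros Hb Hc.
  destruct (pow_sub_ge_eventually (/ b) c m) as [X HX];
    [rewrite <- Rinv_1; apply Rinv_lt_contravar; lra | exact Hc |].
  exists X. intros x Hx.
  specialize (HX (x + c) ltac:(lra)). replace (x + c - c) with x in HX by ring.
  apply (Rmult_le_compat_l b) in HX; [|lra].
  rewrite <- Rmult_assoc, Rinv_r, Rmult_1_l in HX by lra.
  exact HX.
Qed.

Lemma Rpower_INR_half (x : R) (m : nat) : 0 < x -> Rpower x (INR m / 2) = sqrt (x ^ m).
Proof.
  intros Hx.
  rewrite <- Rpower_pow, <- Rpower_sqrt, Rpower_mult by (auto; apply exp_pos).
  reflexivity.
Qed.

Lemma sqrt_pow2_mult (c y : R) : 0 <= c -> sqrt (c ^ 2 * y) = c * sqrt y.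
Proof.
  intros Hc. rewrite sqrt_mult_alt, sqrt_pow2 by (auto; apply pow2_ge_0).
  reflexivity.
Qed.

Lemma rising_eq_raw (x : Z) (s : nat) : (0 <= x)%Z -> rising x s = rising_raw x s.
Proof. intros Hx. unfold rising. destruct (Z.ltb_spec x 0); [lia | reflexivity]. Qed.

Lemma rising_raw_S (x : Z) (s : nat) :
  rising_raw x (S s) = rising_raw x s * (IZR x + INR s).
Proof. cbn [rising_raw]. rewrite plus_IZR, <- INR_IZR_INZ. reflexivity. Qed.

Lemma pow_le_rising_raw (x : Z) (s : nat) : (0 <= x)%Z -> IZR x ^ s <= rising_raw x s.
Proof.
  intros Hx. apply IZR_le in Hx.
  induction s as [|s IH]; [simpl; lra|].
  rewrite rising_raw_S. cbn [pow]. rewrite Rmult_comm.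
  assert (0 <= INR s) by apply pos_INR.
  apply Rmult_le_compat; [apply pow_le | | |]; lra.
Qed.

Lemma rising_raw_nonneg (x : Z) (s : nat) : (0 <= x)%Z -> 0 <= rising_raw x s.
Proof.
  intros Hx. apply Rle_trans with (IZR x ^ s); [|now apply pow_le_rising_raw].
  apply pow_le, IZR_le, Hx.
Qed.

Lemma rising_raw_le_pow (x : Z) (s : nat) (b : R) :
  (0 <= x)%Z -> IZR x + INR s <= b -> rising_raw x s <= b ^ s.
Proof.
  intros Hx. pose proof (IZR_le _ _ Hx) as Hx'.
  induction s as [|s IH]; intros Hb; [simpl; lra|].
  rewrite S_INR in Hb. rewrite rising_raw_S. cbn [pow]. rewrite (Rmult_comm b).
  assert (0 <= INR s) by apply pos_INR.
  apply Rmult_le_compat; [now apply rising_raw_nonneg | lra | apply IH | ]; lra.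
Qed.

Lemma rising_raw_le_mono (x y : Z) (s : nat) :
  (0 <= x <= y)%Z -> rising_raw x s <= rising_raw y s.
Proof.
  intros Hxy. assert (Hxy' : 0 <= IZR x <= IZR y) by (split; apply IZR_le; lia).
  induction s as [|s IH]; [simpl; lra|].
  rewrite !rising_raw_S.
  assert (0 <= INR s) by apply pos_INR.
  apply Rmult_le_compat; [apply rising_raw_nonneg; lia | lra | exact IH | lra].
Qed.

Lemma rising_raw_lt_mono (x y : Z) (s : nat) :
  (0 <= x < y)%Z -> (0 < s)%nat -> rising_raw x s < rising_raw y s.
Proof.
  intros Hxy Hs. destruct s as [|s]; [lia|].
  assert (Hxy' : 0 <= IZR x < IZR y) by (split; [apply IZR_le | apply IZR_lt]; lia).
  rewrite !rising_raw_S.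
  assert (0 <= INR s) by apply pos_INR.
  assert (Hy : 0 < rising_raw y s).
  { apply Rlt_le_trans with (IZR y ^ s); [apply pow_lt; lra|].
    apply pow_le_rising_raw; lia. }
  apply Rle_lt_trans with (rising_raw y s * (IZR x + INR s)).
  - apply Rmult_le_compat_r; [lra|]. apply rising_raw_le_mono; lia.
  - apply Rmult_lt_compat_l; lra.
Qed.

Lemma IZR_sub_of_nat_add1 (n : Z) (l : nat) :
  IZR (n - Z.of_nat l + 1) = IZR n - INR l + 1.
Proof. rewrite plus_IZR, minus_IZR, <- INR_IZR_INZ. reflexivity. Qed.

Lemma sqrt_pow_le_beta (n : Z) (k l : nat) : (Z.of_nat l <= n + 1)%Z ->
  sqrt ((IZR n - INR l + 1) ^ (l + k)) <= beta n k l.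
Proof.
  intros Hl. unfold beta. rewrite !rising_eq_raw by lia.
  apply sqrt_le_1_alt. rewrite pow_add, <- IZR_sub_of_nat_add1.
  apply Rmult_le_compat;
    [apply pow_le, IZR_le | apply pow_le, IZR_le | apply pow_le_rising_raw ..]; lia.
Qed.

Lemma beta_le_sqrt_pow (n : Z) (k l : nat) : (Z.of_nat l <= n + 1)%Z ->
  beta n k l <= sqrt ((IZR n + INR k + 1) ^ (l + k)).
Proof.
  intros Hl. unfold beta. rewrite !rising_eq_raw by lia.
  apply sqrt_le_1_alt. rewrite pow_add.
  pose proof (pos_INR k). pose proof (pos_INR l).
  apply Rmult_le_compat;
    [apply rising_raw_nonneg; lia | apply rising_raw_nonneg; lia | | ];
    (apply rising_raw_le_pow; [lia | rewrite IZR_sub_of_nat_add1; lra]).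
Qed.

Lemma beta_lt_swap (n : Z) (k l : nat) : (l < k)%nat -> (Z.of_nat k <= n + 1)%Z ->
  beta n l k < beta n k l.
Proof.
  intros Hlk Hk. unfold beta. rewrite !rising_eq_raw by lia.
  set (xk := (n - Z.of_nat k + 1)%Z). set (xl := (n - Z.of_nat l + 1)%Z).
  assert (Hxl : 0 < rising_raw xl l).
  { apply Rlt_le_trans with (IZR xl ^ l); [apply pow_lt, IZR_lt; lia|].
    apply pow_le_rising_raw; lia. }
  apply sqrt_lt_1_alt. split.
  { apply Rmult_le_pos; apply rising_raw_nonneg; lia. }
  apply Rle_lt_trans with (rising_raw xk k * rising_raw xl l).
  - apply Rmult_le_compat_l; [apply rising_raw_nonneg | apply rising_raw_le_mono]; lia.
  - rewrite (Rmult_comm (rising_raw xl l)).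
    apply Rmult_lt_compat_r; [exact Hxl | apply rising_raw_lt_mono; lia].
Qed.

Theorem lemma2p9 (k l : nat) (hkl : (l < k)%nat) (C1 C2 : R)
  (hC1pos : 0 < C1) (hC1 : C1 < 1) (hC2 : 1 < C2) :
  exists N : nat, forall n : nat, (N <= n)%nat ->
    C1 * Rpower (INR n) (INR (k + l) / 2) <= beta (Z.of_nat n) l k /\
    beta (Z.of_nat n) l k < beta (Z.of_nat n) k l /\
    beta (Z.of_nat n) k l <= C2 * Rpower (INR n) (INR (k + l) / 2).
Proof.
  assert (Hk : 1 <= INR k) by (apply (le_INR 1); lia).
  destruct (pow_sub_ge_eventually (C1 ^ 2) (INR k - 1) (k + l)) as [X1 HX1]; [nra | lra |].
  destruct (pow_add_le_eventually (C2 ^ 2) (INR k + 1) (k + l)) as [X2 HX2]; [nra | lra |].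
  destruct (INR_unbounded (Rmax 1 (Rmax X1 X2))) as [N HN].
  exists (N + k)%nat. intros n Hn.
  assert (HNn : INR N <= INR n) by (apply le_INR; lia).
  pose proof (Rmax_l 1 (Rmax X1 X2)). pose proof (Rmax_r 1 (Rmax X1 X2)).
  pose proof (Rmax_l X1 X2). pose proof (Rmax_r X1 X2).
  rewrite Rpower_INR_half by lra.
  split; [|split].
  - rewrite <- sqrt_pow2_mult by lra.
    eapply Rle_trans; [|apply sqrt_pow_le_beta; lia].
    rewrite <- INR_IZR_INZ. apply sqrt_le_1_alt.
    replace (INR n - INR k + 1) with (INR n - (INR k - 1)) by ring.
    apply HX1. lra.
  - apply beta_lt_swap; lia.
  - rewrite <- sqrt_pow2_mult by lra.
    eapply Rle_trans; [apply beta_le_sqrt_pow; lia|].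
    rewrite <- INR_IZR_INZ, (Nat.add_comm l k). apply sqrt_le_1_alt.
    replace (INR n + INR k + 1) with (INR n + (INR k + 1)) by ring.
    apply HX2. lra.
Qed.
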